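(* Consider the weighted median search process described in the context. Let $I=\{\tau+1,\dots,\tau+k\}$ be an interval of $k$ consecutive steps such that some vertex $x$ is heavy with respect to the weights $\omega_{t-1}$ at the time of each query $t\in I$, and $x$ remains heavy with respect to $\omega_{\tau+k}$ after the last query in $I$. Then, for any sequence of answers, $$\omega_{\tau+k}(V\setminus\{x\})\le \frac{\omega_\tau(V)}{2^k}.$$
   Context: $G=(V,E)$ is a connected undirected unweighted graph, $0<p<\frac12$, $d(u,v)$ is the graph distance. Positive weights $\omega_t(v)$ are maintained, with $\omega(U)=\sum_{u\in U}\omega(u)$; a vertex $v$ is heavy (w.r.t. $\omega$) if $\omega(v)/\omega(V)\ge\frac12$. A median w.r.t. $\omega$ is a vertex $q$ minimizing $\sum_{u\in V}d(u,q)\omega(u)$. In step $t$ the process queries a median $q$ w.r.t. $\omega_{t-1}$, where a heavy vertex is chosen whenever one exists (a heavy vertex is always a median). The answer is either ''yes'' or a neighbor $u$ of $q$ (a ''no-answer''). A vertex $v$ is compatible with the answer if: for a yes-answer, $v=q$; for a no-answer $u$ with $q$ not heavy, $u$ lies on a shortest $q$–$v$ path; for a no-answer with $q$ heavy, $v\neq q$. Bayesian update: $\omega_t(v)=(1-p)\omega_{t-1}(v)$ if $v$ is compatible and $\omega_t(v)=p\,\omega_{t-1}(v)$ otherwise. *)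

From mathcomp Require Import all_boot all_order all_algebra.
Set Implicit Arguments. Unset Strict Implicit. Unset Printing Implicit Defensive.
Import Order.TTheory GRing.Theory Num.Theory.
Local Open Scope ring_scope.

Fixpoint walkn (T : finType) (e : rel T) (n : nat) (u v : T) : bool :=
  match n with
  | 0 => u == v
  | n'.+1 => [exists w, e u w && walkn e n' w v]
  end.

(* Graph distance: least n with a walk of length n from u to v.
   (In a connected graph it is < #|T|; the search is bounded by #|T|.) *)
Definition dist (T : finType) (e : rel T) (u v : T) : nat :=
  find (fun n => walkn e n u v) (iota 0 #|T|).

Section Process.
Variables (R : realFieldType) (T : finType).

Definition wtot (w : T -> R) : R := \sum_(v : T) w v.

Definition heavy (w : T -> R) (v : T) : bool := w v / wtot w >= 1 / 2.

Definition is_median (e : rel T) (w : T -> R) (q : T) : bool :=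
  [forall y : T, \sum_(u : T) (dist e u q)%:R * w u
                 <= \sum_(u : T) (dist e u y)%:R * w u].

(* Answers: None = "yes", Some u = no-answer pointing to neighbor u. *)
Definition compatible (e : rel T) (w : T -> R) (q : T) (a : option T) (v : T)
  : bool :=
  match a with
  | None => v == q
  | Some u => if heavy w q then v != q
              else dist e q u + dist e u v == dist e q v
  end.

End Process.

From mathcomp Require Import all_boot all_order all_algebra.
From mathcomp Require Import ring lra.
Import Order.TTheory GRing.Theory Num.Theory.
Local Open Scope ring_scope.

(* Track the potential [w(x) * w(V \ x)].  While x and the queried vertex q
   are both heavy, either q = x or all the weight sits on {x, q}; in both
   cases every answer scales w(x) and w(V \ x) by the two different factors
   p and 1 - p, so the potential is multiplied by p (1 - p) <= 1/4 at each
   step.  Initially it is at most w(V)^2 / 4, and at the end, x being heavy,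
   it dominates w(V \ x)^2. *)

Section Weights.
Context {R : realFieldType} {T : finType}.
Implicit Types (w : T -> R) (x q v : T).

Definition wcompl x w : R := \sum_(v | v != x) w v.

Definition potential x w : R := w x * wcompl x w.

Lemma wtotD1 w x : wtot w = w x + wcompl x w.
Proof. by rewrite /wtot (bigD1 x). Qed.

Lemma wcompl_ge0 {w} x : (forall v, 0 <= w v) -> 0 <= wcompl x w.
Proof. by move=> w_ge0; apply: sumr_ge0. Qed.

Lemma heavy_wtot_le {w v} :
  (forall u, 0 <= w u) -> heavy w v -> wtot w <= 2 * w v.
Proof.
move=> w_ge0; rewrite /heavy.
have [->|W_neq0] := eqVneq (wtot w) 0; first by rewrite invr0 mulr0; lra.
have W_gt0 : 0 < wtot w by rewrite lt0r W_neq0 sumr_ge0.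
by rewrite ler_pdivlMr //; lra.
Qed.

Lemma heavy_wcompl_le {w x} :
  (forall v, 0 <= w v) -> heavy w x -> wcompl x w <= w x.
Proof. by move=> w_ge0 /(heavy_wtot_le w_ge0); rewrite (wtotD1 _ x); lra. Qed.

Lemma wcompl_sqr_le_potential {w x} :
  (forall v, 0 <= w v) -> heavy w x -> wcompl x w ^+ 2 <= potential x w.
Proof.
move=> w_ge0 hx; rewrite expr2 /potential.
have := heavy_wcompl_le w_ge0 hx; have := wcompl_ge0 x w_ge0; nra.
Qed.

Lemma potential_le_wtot_sqr w x : 4 * potential x w <= wtot w ^+ 2.
Proof.
rewrite /potential (wtotD1 _ x).
have := sqr_ge0 (w x - wcompl x w); lra.
Qed.

Lemma heavy_pair_support {w x q v} : (forall u, 0 <= w u) ->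
  x != q -> heavy w x -> heavy w q -> v != x -> v != q -> w v = 0.
Proof.
move=> w_ge0 xq /(heavy_wtot_le w_ge0) hx /(heavy_wtot_le w_ge0) hq vx vq.
have W_eq : wtot w = w x + (w q + \sum_(u | (u != x) && (u != q)) w u).
  by rewrite (wtotD1 _ x) /wcompl (bigD1 q) // eq_sym.
have rest_ge0 : 0 <= \sum_(u | (u != x) && (u != q)) w u by exact: sumr_ge0.
have rest_eq0 : \sum_(u | (u != x) && (u != q)) w u = 0 by lra.
by apply: (psumr_eq0P _ rest_eq0) => [u _|]; rewrite ?vx.
Qed.

Lemma heavy_query_separates {w x q v} : (forall u, 0 <= w u) ->
  heavy w x -> heavy w q -> v != x -> w v != 0 -> (v == q) != (x == q).
Proof.
move=> w_ge0 hx hq vx wv_neq0.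
have [<-|xq] := eqVneq x q; first by rewrite (negbTE vx).
have [//|vq] := eqVneq v q.
by rewrite (heavy_pair_support w_ge0 xq hx hq vx vq) eqxx in wv_neq0.
Qed.

Lemma potential_update (p : R) (c : pred T) w0 w1 x :
  (forall v, w1 v = (if c v then 1 - p else p) * w0 v) ->
  (forall v, v != x -> w0 v != 0 -> c v != c x) ->
  potential x w1 = p * (1 - p) * potential x w0.
Proof.
move=> w1E sep.
have wcompl1 : wcompl x w1 = (if c x then p else 1 - p) * wcompl x w0.
  rewrite /wcompl mulr_sumr; apply: eq_bigr => v vx; rewrite w1E.
  have [->|wv_neq0] := eqVneq (w0 v) 0; first by rewrite !mulr0.
  by move: (sep v vx wv_neq0); case: (c v); case: (c x).
by rewrite /potential wcompl1 w1E; case: (c x); ring.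
Qed.

Lemma compatible_heavy (e : rel T) w q a v : heavy w q ->
  compatible e w q a v = ((v == q) == (a == None)).
Proof.
by move=> hq; case: a => [u|] /=; rewrite /compatible ?hq; case: (v == q).
Qed.

End Weights.

Section Process.
Context {R : realFieldType} {T : finType}.
Context {e : rel T} {p : R}.
Context {w : nat -> T -> R} {q : nat -> T} {a : nat -> option T}.
Hypotheses (p_gt0 : 0 < p) (p_lt1 : p < 1).
Hypothesis w0_gt0 : forall v, 0 < w 0%N v.
Hypothesis heavy_query :
  forall t, (exists v, heavy (w t) v) -> heavy (w t) (q t.+1).
Hypothesis wS : forall t v, w t.+1 v =
  (if compatible e (w t) (q t.+1) (a t.+1) v then 1 - p else p) * w t v.

Lemma weight_ge0 t v : 0 <= w t v.
Proof.
elim: t v => [|t IH] v; first exact: ltW.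
by rewrite wS mulr_ge0 ?IH //; case: ifP => _; rewrite ?subr_ge0 ltW.
Qed.

Lemma potentialS t x : heavy (w t) x ->
  potential x (w t.+1) = p * (1 - p) * potential x (w t).
Proof.
move=> hx; have hq := heavy_query t (ex_intro _ x hx).
apply: (potential_update p (fun v => (v == q t.+1) == (a t.+1 == None))).
  by move=> v; rewrite wS compatible_heavy.
move=> v vx wv_neq0.
have := heavy_query_separates (weight_ge0 t) hx hq vx wv_neq0.
by case: (a t.+1 == None); case: (v == q t.+1); case: (x == q t.+1).
Qed.

Lemma potential_iter tau k x :
  (forall t, (tau < t <= tau + k)%N -> heavy (w t.-1) x) ->
  potential x (w (tau + k)%N) = (p * (1 - p)) ^+ k * potential x (w tau).
Proof.
elim: k => [|k IH] hI; first by rewrite addn0 mul1r.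
rewrite addnS potentialS; last first.
  by apply: (hI (tau + k).+1); rewrite addnS ltnS leq_addr /=.
rewrite IH ?exprS ?mulrA // => t /andP [lt_tau le_t].
by apply: hI; rewrite lt_tau /= addnS ltnW.
Qed.

End Process.

Theorem lemma4 (R : realFieldType) (T : finType) (e : rel T) (p : R)
    (w : nat -> T -> R) (q : nat -> T) (a : nat -> option T)
    (tau k : nat) (x : T) :
  symmetric e -> irreflexive e -> (forall u v, connect e u v) ->
  0 < p -> p < 1 / 2 ->
  (forall v, 0 < w 0%N v) ->
  (forall t, is_median e (w t) (q t.+1)) ->
  (forall t, (exists v, heavy (w t) v) -> heavy (w t) (q t.+1)) ->
  (forall t u, a t.+1 = Some u -> e (q t.+1) u) ->
  (forall t v, w t.+1 v =
     (if compatible e (w t) (q t.+1) (a t.+1) v then 1 - p else p) * w t v) ->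
  (forall t, (tau < t <= tau + k)%N -> heavy (w t.-1) x) ->
  heavy (w (tau + k)%N) x ->
  \sum_(v | v != x) w (tau + k)%N v <= wtot (w tau) / 2 ^+ k.
Proof.
move=> _ _ _ p_gt0 p_lt_half w0_gt0 _ heavy_query _ wS hI hx_end.
have p_lt1 : p < 1 by lra.
have w_ge0 := weight_ge0 p_gt0 p_lt1 w0_gt0 wS.
have pq_le : p * (1 - p) <= 1 / 4 by nra.
have Phi_end := potential_iter p_gt0 p_lt1 w0_gt0 heavy_query wS tau k x hI.
have Phi_tau := potential_le_wtot_sqr (w tau) x.
have Phi_tau_ge0 : 0 <= potential x (w tau) by rewrite mulr_ge0 ?wcompl_ge0.
have decay : (p * (1 - p)) ^+ k <= (1 / 4) ^+ k.
  by rewrite lerXn2r ?nnegrE ?mulr_ge0 //; lra.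
have bound_sqr : (wtot (w tau) / 2 ^+ k) ^+ 2 = (1 / 4) ^+ k * wtot (w tau) ^+ 2.
  by rewrite expr_div_n -exprM mulnC exprM expr_div_n expr1n mulrC mul1r -natrX.
have B_sqr : wcompl x (w (tau + k)%N) ^+ 2 <= (wtot (w tau) / 2 ^+ k) ^+ 2.
  apply: le_trans (wcompl_sqr_le_potential (w_ge0 _) hx_end) _.
  by rewrite Phi_end bound_sqr ler_pM ?exprn_ge0 ?mulr_ge0 ?wcompl_ge0 //; lra.
by rewrite -ler_sqr ?nnegrE ?wcompl_ge0 ?divr_ge0 ?sumr_ge0 ?exprn_ge0.
Qed.
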